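(* Let $\Psi\in\mathcal{K}_{\mathrm{FxT}}$ and $\sigma(s)=\sum_{i=1}^nc_is^{r_i}$ with $1\le r_1<r_2<\dots<r_n$ and real $c_i\neq0$, and suppose $\sigma'(s)>0$ for all $s>0$. Then there exists $\tilde\Psi\in\mathcal{K}_{\mathrm{FxT}}$ such that $\tilde\Psi(\sigma(s))\le\Psi(s)\sigma'(s)$ for all $s>0$.
   Context: $\mathcal{K}_{\mathrm{FxT}}$ denotes the set of functions $\alpha:\mathbb{R}_{\ge0}\to\mathbb{R}_{\ge0}$ of the form $\alpha(s)=c_1s^{p_1}+c_2s^{p_2}$ with $c_1,c_2>0$, $p_1\in(0,1)$ and $p_2>1$. *)

From mathcomp Require Import all_boot all_order all_algebra.
From mathcomp Require Import all_classical all_reals all_analysis.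
Set Implicit Arguments. Unset Strict Implicit. Unset Printing Implicit Defensive.
Import Order.TTheory GRing.Theory Num.Theory.
Local Open Scope ring_scope.

Definition K_FxT (R : realType) (alpha : R -> R) : Prop :=
  exists c1 c2 p1 p2 : R,
    [/\ 0 < c1, 0 < c2, 0 < p1 < 1, 1 < p2 &
        forall s : R, 0 <= s -> alpha s = c1 * s `^ p1 + c2 * s `^ p2].

Definition sigma_fun (R : realType) (n : nat) (c r : 'I_n -> R) (s : R) : R :=
  \sum_(i < n) c i * s `^ r i.

From mathcomp Require Import all_boot all_order all_algebra.
From mathcomp Require Import all_classical all_reals all_analysis.
From mathcomp Require Import lra.

(* Write sigma'(s) = sum_i c_i r_i s^(r_i - 1).  Divided by s^(r_1 - 1) it
   becomes a sum of powers with nonnegative exponents, continuous on [0, 1]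
   with value c_1 r_1 <> 0 at 0; being positive on (0, 1], it is bounded below
   there by some k > 0.  Substituting 1/s for s gives symmetrically
   sigma'(s) >= k s^(r_n - 1) on [1, +oo), while sigma(s) <= A s^(r_1) on
   (0, 1] and sigma(s) <= A s^(r_n) on [1, +oo).  So on (0, 1] we get
   Psi(s) sigma'(s) >= m k s^(p_1 + r_1 - 1) and sigma(s)^q <= A^q s^(r_1 q),
   and symmetrically on [1, +oo): the exponents q_1 = (p_1 + r_1 - 1) / r_1,
   in (0, 1), and q_2 = (p_2 + r_n - 1) / r_n > 1 make
   Psit(x) = b (x^q_1 + x^q_2) work for b small enough. *)

Set Implicit Arguments.
Unset Strict Implicit.
Unset Printing Implicit Defensive.

Import Order.TTheory GRing.Theory Num.Theory.
Import numFieldNormedType.Exports.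
Local Open Scope classical_set_scope.
Local Open Scope ring_scope.

Section sigma_fun_theory.
Variables (R : realType) (n : nat) (w d : 'I_n -> R).

Lemma is_derive_sigma_fun (t : R) : 0 < t ->
  is_derive t 1 (sigma_fun w d)
    (sigma_fun (fun i => w i * d i) (fun i => d i - 1) t).
Proof.
move=> t0.
have -> : sigma_fun w d = \sum_(i < n) (fun x => w i * x `^ d i).
  by apply/funext => x; rewrite fct_sumE.
rewrite /sigma_fun; under [X in is_derive _ _ _ X]eq_bigr do rewrite -mulrA.
apply: is_derive_sum => i; apply: is_deriveZ; exact: is_derive1_powR.
Qed.

Lemma derive1_sigma_fun (t : R) : 0 < t ->
  derive1 (sigma_fun w d) t =
  sigma_fun (fun i => w i * d i) (fun i => d i - 1) t.
Proof.
by move=> t0; rewrite derive1E; apply: derive_val; exact: is_derive_sigma_fun.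
Qed.

Lemma sigma_fun_powR_factor (a t : R) : 0 < t ->
  sigma_fun w d t = t `^ a * sigma_fun w (fun i => d i - a) t.
Proof.
move=> t0; rewrite /sigma_fun mulr_sumr; apply: eq_bigr => i _.
rewrite mulrCA -powRD; last by apply/implyP => _; rewrite gt_eqF.
by rewrite addrC subrK.
Qed.

Lemma sigma_fun_inv (t : R) : 0 < t ->
  sigma_fun w d t^-1 = sigma_fun w (fun i => - d i) t.
Proof.
move=> t0; apply: eq_bigr => i _.
by rewrite -powR_inv1 ?(ltW t0) // -powRrM mulN1r.
Qed.

Lemma sigma_fun_le_norm (s e : R) : (forall i, s `^ d i <= s `^ e) ->
  sigma_fun w d s <= (\sum_(i < n) `|w i|) * s `^ e.
Proof.
move=> le_pow; rewrite /sigma_fun mulr_suml; apply: ler_sum => i _.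
apply: le_trans (ler_wpM2l (normr_ge0 _) (le_pow i)).
by rewrite ler_wpM2r ?powR_ge0 ?ler_norm.
Qed.

Lemma continuous_sigma_fun (t : R) : 0 < t ->
  {for t, continuous (sigma_fun w d)}.
Proof.
move=> t0; apply/differentiable_continuous/derivable1_diffP.
by case: (is_derive_sigma_fun t0).
Qed.

Hypothesis d_ge0 : forall i, 0 <= d i.

Lemma sigma_fun_cvg0 : sigma_fun w d t @[t --> 0^'+] --> sigma_fun w d 0.
Proof.
apply: cvg_big => [|i _]; first exact: add_continuous.
apply: cvgM; first exact: cvg_cst.
have [->|dnz] := eqVneq (d i) 0.
  by under eq_cvg do rewrite powRr0; rewrite powRr0; exact: cvg_cst.
by rewrite powR0 //; apply: powR_cvg0; rewrite lt_neqAle eq_sym dnz d_ge0.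
Qed.

Lemma within_continuous_sigma_fun (b : R) : 0 < b ->
  {within `[0, b], continuous (sigma_fun w d)}.
Proof.
move=> b0; apply/continuous_within_itvP => //; split.
- by move=> t; rewrite in_itv => /andP[t0 _]; exact: continuous_sigma_fun.
- exact: sigma_fun_cvg0.
- exact/cvg_at_left_filter/continuous_sigma_fun.
Qed.

End sigma_fun_theory.

Lemma continuous_itv_pos_ge (R : realType) (f : R -> R) (a b : R) : a <= b ->
  {within `[a, b], continuous f} -> (forall t, a <= t <= b -> 0 < f t) ->
  exists2 k, 0 < k & forall t, a <= t <= b -> k <= f t.
Proof.
move=> ab cf f_pos; have [c cab c_min] := EVT_min ab cf.
exists (f c); first by apply: f_pos; rewrite in_itv in cab.
by move=> t tab; apply: c_min; rewrite in_itv.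
Qed.

Lemma sigma_fun_ge_lowest (R : realType) n (w d : 'I_n -> R) (i0 : 'I_n) :
  (forall i, i != i0 -> d i0 < d i) -> w i0 != 0 ->
  (forall t, 0 < t <= 1 -> 0 < sigma_fun w d t) ->
  exists2 k, 0 < k & forall t, 0 < t <= 1 -> k * t `^ d i0 <= sigma_fun w d t.
Proof.
move=> d_gt w0 pos; set e := fun i => d i - d i0.
have e_ge0 i : 0 <= e i.
  have [->|/d_gt] := eqVneq i i0; first by rewrite /e subrr.
  by rewrite /e subr_ge0 => /ltW.
have g_pos t : 0 < t <= 1 -> 0 < sigma_fun w e t.
  move=> /[dup] /andP[t0 _] /pos.
  by rewrite (sigma_fun_powR_factor w d (d i0) t0) pmulr_rgt0 // powR_gt0.
have g0 : sigma_fun w e 0 = w i0.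
  rewrite /sigma_fun (bigD1 i0) //= big1 => [|i ii0].
    by rewrite /e subrr powRr0 mulr1 addr0.
  by rewrite powR0 ?mulr0 // gt_eqF // subr_gt0 d_gt.
(* The sign of [w i0] is not assumed: positivity near [0] forces it. *)
have g0_pos : 0 < sigma_fun w e 0.
  rewrite lt_neqAle g0 eq_sym w0 -g0 /=.
  apply: (cvgr_to_ge (sigma_fun_cvg0 e_ge0)); near=> t.
  apply/ltW/g_pos; apply/andP; split; near: t; first exact: nbhs_right_gt.
  exact: nbhs_right_le.
have g_pos01 t : 0 <= t <= 1 -> 0 < sigma_fun w e t.
  case/andP; rewrite le_eqVlt => /orP[/eqP <- _ //|t0 t1].
  by apply: g_pos; rewrite t0 t1.
have [k k0 hk] :=
  continuous_itv_pos_ge ler01 (within_continuous_sigma_fun e_ge0 ltr01) g_pos01.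
exists k => // t /andP[t0 t1].
rewrite (sigma_fun_powR_factor w d (d i0) t0) mulrC ler_wpM2l ?powR_ge0 //.
by apply: hk; rewrite t1 ltW.
Unshelve. all: by end_near.
Qed.

Lemma sigma_fun_ge_highest (R : realType) n (w d : 'I_n -> R) (i1 : 'I_n) :
  (forall i, i != i1 -> d i < d i1) -> w i1 != 0 ->
  (forall t, 1 <= t -> 0 < sigma_fun w d t) ->
  exists2 k, 0 < k & forall t, 1 <= t -> k * t `^ d i1 <= sigma_fun w d t.
Proof.
move=> d_lt w1 pos.
have Nd_inv t : 0 < t -> sigma_fun w (fun i => - d i) t^-1 = sigma_fun w d t.
  move=> t0; rewrite sigma_fun_inv //.
  by congr sigma_fun; apply/funext => i; rewrite opprK.
have Nd_gt i : i != i1 -> - d i1 < - d i by move/d_lt; rewrite ltrN2.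
have Nd_pos t : 0 < t <= 1 -> 0 < sigma_fun w (fun i => - d i) t.
  move=> /andP[t0 t1]; rewrite -[t in sigma_fun _ _ t]invrK Nd_inv //.
    by apply: pos; rewrite invf_ge1.
  by rewrite invr_gt0.
have [k k0 hk] := sigma_fun_ge_lowest Nd_gt w1 Nd_pos.
exists k => // t t1; have t0 : 0 < t by apply: lt_le_trans t1.
rewrite -Nd_inv //; apply: le_trans (hk _ _).
  by rewrite -powR_inv1 ?(ltW t0) // -powRrM mulN1r opprK.
by rewrite invr_gt0 t0 invf_le1.
Qed.

Lemma powR_le_mul_powR (R : realType) (x A s rho q : R) :
  0 <= x -> 0 <= A -> 0 <= q -> x <= A * s `^ rho ->
  x `^ q <= A `^ q * s `^ (rho * q).
Proof.
move=> x0 A0 q0 xA; rewrite powRrM -powRM ?powR_ge0 //.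
by apply: ge0_ler_powR; rewrite ?nnegrE ?mulr_ge0 ?powR_ge0.
Qed.

Lemma scaled_powR_sum_le_mul (R : realType) (x D P s A k m rho p q1 q2 : R) :
  0 < s -> 0 <= A -> 0 < k -> 0 < m -> 0 <= q1 -> 0 <= q2 -> 0 <= x ->
  x <= A * s `^ rho -> k * s `^ (rho - 1) <= D -> m * s `^ p <= P ->
  s `^ (rho * q1) <= s `^ (p + rho - 1) ->
  s `^ (rho * q2) <= s `^ (p + rho - 1) ->
  m * k / (1 + (A `^ q1 + A `^ q2)) * (x `^ q1 + x `^ q2) <= P * D.
Proof.
move=> s0 A0 k0 m0 q1_ge0 q2_ge0 x0 xA kD mP sq1 sq2.
set M := A `^ q1 + A `^ q2; set e := p + rho - 1.
have M0 : 0 <= M by rewrite addr_ge0 ?powR_ge0.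
have xM : x `^ q1 + x `^ q2 <= M * s `^ e.
  rewrite mulrDl; apply: lerD.
    apply: le_trans (powR_le_mul_powR x0 A0 q1_ge0 xA) _.
    by rewrite ler_wpM2l ?powR_ge0.
  apply: le_trans (powR_le_mul_powR x0 A0 q2_ge0 xA) _.
  by rewrite ler_wpM2l ?powR_ge0.
have PD : m * k * s `^ e <= P * D.
  rewrite /e -addrA powRD; last by apply/implyP => _; rewrite gt_eqF.
  rewrite mulrACA; apply: ler_pM mP kD.
    by rewrite mulr_ge0 ?powR_ge0 ?(ltW m0).
  by rewrite mulr_ge0 ?powR_ge0 ?(ltW k0).
apply: le_trans PD; rewrite -mulrA ler_wpM2l ?(mulr_ge0 (ltW m0) (ltW k0)) //.
apply: le_trans (ler_wpM2l _ xM) _; first by rewrite invr_ge0; lra.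
rewrite mulrA -[leRHS]mul1r ler_wpM2r ?powR_ge0 // mulrC ler_pdivrMr; lra.
Qed.

Section increasing_exponents.
Variables (R : realType) (n : nat) (c r : 'I_n.+1 -> R).
Hypothesis r_gt0 : forall i, 0 < r i.
Hypothesis r_incr : forall i j : 'I_n.+1, (i < j)%N -> r i < r j.
Hypothesis c_neq0 : forall i, c i != 0.
Hypothesis derive1_gt0 : forall s, 0 < s -> 0 < derive1 (sigma_fun c r) s.

Lemma r_ord0_lt i : i != ord0 -> r ord0 < r i.
Proof. by move=> i0; apply: r_incr; rewrite lt0n. Qed.

Lemma r_lt_ord_max i : i != ord_max -> r i < r ord_max.
Proof.
move=> iN; apply: r_incr; rewrite ltn_neqAle -ltnS ltn_ord andbT.
by apply: contra iN => /eqP iN; apply/eqP/val_inj.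
Qed.

Lemma sigma_fun_le_ord0 s : 0 < s <= 1 ->
  sigma_fun c r s <= (\sum_i `|c i|) * s `^ r ord0.
Proof.
move=> s01; apply: sigma_fun_le_norm => i; apply: ger_powR => //.
by have [->|/r_ord0_lt/ltW] := eqVneq i ord0.
Qed.

Lemma sigma_fun_le_ord_max s : 1 <= s ->
  sigma_fun c r s <= (\sum_i `|c i|) * s `^ r ord_max.
Proof.
move=> s1; apply: sigma_fun_le_norm => i; apply: ler_powR => //.
by have [->|/r_lt_ord_max/ltW] := eqVneq i ord_max.
Qed.

Lemma derive1_sigma_fun_ge : exists2 k, 0 < k &
  (forall s, 0 < s <= 1 ->
     k * s `^ (r ord0 - 1) <= derive1 (sigma_fun c r) s) /\
  (forall s, 1 <= s ->
     k * s `^ (r ord_max - 1) <= derive1 (sigma_fun c r) s).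
Proof.
set w := fun i => c i * r i; set d := fun i => r i - 1.
have w_neq0 i : w i != 0 by rewrite mulf_neq0 ?c_neq0 // gt_eqF.
have pos s : 0 < s -> 0 < sigma_fun w d s.
  by move=> s0; rewrite -derive1_sigma_fun ?derive1_gt0.
have pos01 s : 0 < s <= 1 -> 0 < sigma_fun w d s by case/andP => /pos.
have pos1 s : 1 <= s -> 0 < sigma_fun w d s by move/(lt_le_trans ltr01)/pos.
have d_gt i : i != ord0 -> d ord0 < d i by move/r_ord0_lt; rewrite ltrD2r.
have d_lt i : i != ord_max -> d i < d ord_max.
  by move/r_lt_ord_max; rewrite ltrD2r.
have [k0 k0_gt0 hk0] := sigma_fun_ge_lowest d_gt (w_neq0 ord0) pos01.
have [kN kN_gt0 hkN] := sigma_fun_ge_highest d_lt (w_neq0 ord_max) pos1.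
exists (Order.min k0 kN); first by rewrite lt_min k0_gt0.
split=> s hs.
  rewrite derive1_sigma_fun; last by case/andP: hs.
  by apply: le_trans (hk0 _ hs); rewrite ler_wpM2r ?powR_ge0 ?ge_min ?lexx.
rewrite derive1_sigma_fun; last exact: lt_le_trans hs.
apply: le_trans (hkN _ hs).
by rewrite ler_wpM2r ?powR_ge0 // ge_min lexx orbT.
Qed.

Lemma exists_scaled_powR_sum_le (P : R -> R) (m p1 p2 q1 q2 : R) :
  0 < m -> 0 <= q1 <= q2 ->
  r ord0 * q1 = p1 + r ord0 - 1 -> r ord_max * q2 = p2 + r ord_max - 1 ->
  (forall s, 0 < s -> m * s `^ p1 <= P s /\ m * s `^ p2 <= P s) ->
  exists2 b, 0 < b & forall s, 0 < s -> 0 <= sigma_fun c r s ->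
    b * (sigma_fun c r s `^ q1 + sigma_fun c r s `^ q2) <=
    P s * derive1 (sigma_fun c r) s.
Proof.
move=> m_gt0 /andP[q1_ge0 q1_le_q2] rq1 rq2 P_ge.
have q2_ge0 := le_trans q1_ge0 q1_le_q2.
have [k k_gt0 [der_ge_ord0 der_ge_ord_max]] := derive1_sigma_fun_ge.
set A := \sum_i `|c i|; have A_ge0 : 0 <= A by rewrite sumr_ge0.
exists (m * k / (1 + (A `^ q1 + A `^ q2))).
  by rewrite divr_gt0 ?mulr_gt0 // ltr_pwDl ?addr_ge0 ?powR_ge0.
move=> s s_gt0 x_ge0; have [P_ge1 P_ge2] := P_ge s s_gt0.
have scaled_le :=
  scaled_powR_sum_le_mul s_gt0 A_ge0 k_gt0 m_gt0 q1_ge0 q2_ge0 x_ge0.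
have [s_le1|s_gt1] := leP s 1.
  have s01 : 0 < s <= 1 by rewrite s_gt0.
  apply: (scaled_le _ _ _ _ (sigma_fun_le_ord0 s01) (der_ge_ord0 _ s01) P_ge1).
    by rewrite rq1.
  by rewrite -rq1; apply: ger_powR => //; rewrite ler_pM2l ?r_gt0.
have s_ge1 : 1 <= s by exact: ltW.
apply: (scaled_le _ _ _ _ (sigma_fun_le_ord_max s_ge1)
  (der_ge_ord_max _ s_ge1) P_ge2).
  by rewrite -rq2; apply: ler_powR => //; rewrite ler_pM2l ?r_gt0.
by rewrite rq2.
Qed.

End increasing_exponents.

Lemma min_mul_powR_sum_le (R : realType) (a1 a2 p1 p2 s : R) :
  0 <= a1 -> 0 <= a2 ->
  Order.min a1 a2 * s `^ p1 <= a1 * s `^ p1 + a2 * s `^ p2 /\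
  Order.min a1 a2 * s `^ p2 <= a1 * s `^ p1 + a2 * s `^ p2.
Proof.
move=> a1_ge0 a2_ge0; split.
  apply: (@le_trans _ _ (a1 * s `^ p1)).
    by rewrite ler_wpM2r ?powR_ge0 ?ge_min ?lexx.
  by rewrite lerDl mulr_ge0 ?powR_ge0.
apply: (@le_trans _ _ (a2 * s `^ p2)).
  by rewrite ler_wpM2r ?powR_ge0 // ge_min lexx orbT.
by rewrite lerDr mulr_ge0 ?powR_ge0.
Qed.

(* If sigma(s) behaves like s^rho and Psi(s) like s^p, then Psi(s) sigma'(s)
   behaves like s^(p + rho - 1) = sigma(s)^q for this q. *)
Definition shifted_exponent (R : realType) (p rho : R) := (p + rho - 1) / rho.

Lemma mulr_shifted_exponent (R : realType) (p rho : R) : 0 < rho ->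
  rho * shifted_exponent p rho = p + rho - 1.
Proof. by move=> rho0; rewrite /shifted_exponent mulrC divfK ?gt_eqF. Qed.

Lemma shifted_exponent_gt0 (R : realType) (p rho : R) : 0 < p -> 1 <= rho ->
  0 < shifted_exponent p rho.
Proof. by move=> p0 rho1; rewrite divr_gt0; lra. Qed.

Lemma shifted_exponent_lt1 (R : realType) (p rho : R) : p < 1 -> 0 < rho ->
  shifted_exponent p rho < 1.
Proof. by move=> p1 rho0; rewrite ltr_pdivrMr // mul1r; lra. Qed.

Lemma shifted_exponent_gt1 (R : realType) (p rho : R) : 1 < p -> 0 < rho ->
  1 < shifted_exponent p rho.
Proof. by move=> p1 rho0; rewrite ltr_pdivlMr // mul1r; lra. Qed.

Theorem lemma5 (R : realType) (Psi : R -> R) (n : nat) (c r : 'I_n -> R) :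
  K_FxT Psi ->
  (forall i : 'I_n, 1 <= r i) ->
  (forall i j : 'I_n, (i < j)%N -> r i < r j) ->
  (forall i : 'I_n, c i != 0) ->
  (forall s : R, 0 < s -> 0 < derive1 (sigma_fun c r) s) ->
  exists Psit : R -> R, K_FxT Psit /\
    (forall s : R, 0 < s ->
       Psit (sigma_fun c r s) <= Psi s * derive1 (sigma_fun c r) s).
Proof.
case=> a1 [a2 [p1 [p2 [a1_gt0 a2_gt0 /andP[p1_gt0 p1_lt1] p2_gt1 Psi_E]]]].
case: n c r => [|n] c r r_ge1 r_incr c_neq0 der_gt0.
  have := der_gt0 1 ltr01.
  by rewrite derive1_sigma_fun // /sigma_fun big_ord0 ltxx.
have r_gt0 i : 0 < r i by apply: lt_le_trans (r_ge1 i).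
set q1 := shifted_exponent p1 (r ord0).
set q2 := shifted_exponent p2 (r ord_max).
have q1_gt0 : 0 < q1 by exact: shifted_exponent_gt0.
have q2_gt1 : 1 < q2 by exact: shifted_exponent_gt1.
have q_bounds : 0 <= q1 <= q2.
  by rewrite ltW //= ltW // (lt_trans _ q2_gt1) ?shifted_exponent_lt1.
have Psi_ge s : 0 < s ->
    Order.min a1 a2 * s `^ p1 <= Psi s /\ Order.min a1 a2 * s `^ p2 <= Psi s.
  move=> s_gt0; rewrite Psi_E ?(ltW s_gt0) //.
  by apply: min_mul_powR_sum_le; exact: ltW.
have m_gt0 : 0 < Order.min a1 a2 by rewrite lt_min a1_gt0.
have [b b_gt0 Psit_le] := exists_scaled_powR_sum_le r_gt0 r_incr c_neq0 der_gt0
  m_gt0 q_bounds (mulr_shifted_exponent _ (r_gt0 _))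
  (mulr_shifted_exponent _ (r_gt0 _)) Psi_ge.
(* The guard matters: [powR] sends negative bases to [1]. *)
exists (fun x => if 0 <= x then b * x `^ q1 + b * x `^ q2 else 0); split.
  exists b, b, q1, q2; split => // [|x ->] //.
  by rewrite q1_gt0 shifted_exponent_lt1.
move=> s s_gt0; case: ifP => [x_ge0|_]; first by rewrite -mulrDr Psit_le.
have [Psi_ge1 _] := Psi_ge s s_gt0.
rewrite mulr_ge0 ?(ltW (der_gt0 _ s_gt0)) // (le_trans _ Psi_ge1) //.
by rewrite mulr_ge0 ?powR_ge0 ?(ltW m_gt0).
Qed.
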